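(* Let $n\ge1$, $\vec m=(m_1,\dots,m_n)\in\mathbb{N}^n$ and $1\le j\le n$. For every $w\in\mathbb{Q}_{\ge0}$, $$N_{\Delta(G^j_{n,\vec m})}(w)=2\,N_{\Delta(G^{j-1}_{n,\vec m})}(w)-N_{\Delta(G^{j-1}_{n-1,(m_1,\dots,\widehat{m_j},\dots,m_n)})}(w),$$ where the last polytope lives in $\mathbb{R}^{n-1}$ (coordinates $x_1,\dots,\widehat{x_j},\dots,x_n$), and for $n=1$ it is the zero-dimensional polytope $\{0\}\subset\mathbb{R}^0$, for which $N(w)=1$ if $w=0$ and $N(w)=0$ otherwise.
   Context: For $\vec m\in\mathbb N^n$ and $0\le j\le n$, $G^j_{n,\vec m}=x_1^{m_1}+\dots+x_n^{m_n}+x_1^{-m_1}+\dots+x_j^{-m_j}$, and $\Delta(G^j_{n,\vec m})$ is its Newton polytope, the convex hull of $\vec 0$, $m_ie_i$ ($1\le i\le n$) and $-m_ie_i$ ($1\le i\le j$). For a polytope $\Delta\subset\mathbb{R}^n$ containing $\vec0$, the weight $w_\Delta(u)$ of $u\in\mathbb{Q}^n$ is the smallest $c\in\mathbb{Q}_{\ge0}$ with $u\in c\Delta$ ($\infty$ if none), and $N_\Delta(w)=\#\{u\in\mathbb{Z}^n: w_\Delta(u)=w\}$. *)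

From HB Require Import structures.
From mathcomp Require Import all_boot all_order all_algebra.
Set Implicit Arguments. Unset Strict Implicit. Unset Printing Implicit Defensive.
Import Order.TTheory GRing.Theory Num.Theory.
Local Open Scope ring_scope.

Definition qvec (n : nat) := {ffun 'I_n -> rat}.
Definition zvec (n : nat) := {ffun 'I_n -> int}.

Definition zvec_to_q (n : nat) (u : zvec n) : qvec n := [ffun i => (u i)%:~R].

(* Vertex list of Delta(G^j_{n,m}): 0, m_i e_i (all i), -m_i e_i (the first j
   indices, i.e. 0-based i < j). *)
Definition Gverts (n : nat) (m : 'I_n -> nat) (j : nat) : seq (qvec n) :=
  [ffun _ => 0]
  :: [seq [ffun k => if k == i then (m i)%:R else 0] | i <- enum 'I_n]
  ++ [seq [ffun k => if k == i then - (m i)%:R else 0] | i <- enum 'I_n & (val i < j)%N].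

Definition in_dilate (n : nat) (V : seq (qvec n)) (c : rat) (x : qvec n) : Prop :=
  exists lam : 'I_(size V) -> rat,
    (forall k, 0 <= lam k) /\ \sum_k lam k = c /\
    (forall t, \sum_k lam k * (nth [ffun _ => 0] V k) t = x t).

Definition is_weight (n : nat) (V : seq (qvec n)) (x : qvec n) (c : rat) : Prop :=
  0 <= c /\ in_dilate V c x /\
  (forall c', 0 <= c' -> in_dilate V c' x -> c <= c').

Definition Ncard (n : nat) (V : seq (qvec n)) (w : rat) (k : nat) : Prop :=
  exists s : seq (zvec n), uniq s /\ size s = k /\
    (forall u, u \in s <-> is_weight V (zvec_to_q u) w).

From HB Require Import structures.
From mathcomp Require Import all_boot all_order all_algebra zify.
Set Implicit Arguments. Unset Strict Implicit. Unset Printing Implicit Defensive.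
Import Order.TTheory GRing.Theory Num.Theory.
Local Open Scope ring_scope.

(* 1. The weight of the polytope Delta(G^j_{n,m}) has a closed form: x lies in
      c * Delta iff c >= 0, every nonzero coordinate x_i has m_i > 0, every
      negative coordinate has i < j, and gauge(x) := sum_i |x_i| / m_i <= c.
      Hence w(x) = gauge(x) for such admissible x ([dilate_Gverts],
      [weight_Gverts]).
   2. The lattice points of weight w lie in a box (|x_i| <= w m_i), so they can
      be enumerated by a duplicate-free list ([enum_box], [has_weight_enum]).
   3. Adding the vertex -m_j e_j only allows x_j < 0; the points of weight w for
      G^j are those of G^{j-1} together with the mirror images (x_j -> -x_j) of
      those with x_j > 0, while the points of G^{j-1} with x_j = 0 are exactly the
      points of the face polytope in R^{n-1}.  Since every point of G^{j-1} has
      x_j >= 0, counting gives a + c = 2 b. *)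

Section Dilates.
Variables (n : nat) (V : seq (qvec n)).

Lemma dilate_add c1 c2 x1 x2 (x : qvec n) : in_dilate V c1 x1 -> in_dilate V c2 x2 ->
  (forall t, x t = x1 t + x2 t) -> in_dilate V (c1 + c2) x.
Proof.
move=> [l1 [p1 [s1 e1]]] [l2 [p2 [s2 e2]]] e.
exists (fun k => l1 k + l2 k); split; first by move=> k; rewrite addr_ge0.
split; first by rewrite big_split /= s1 s2.
by move=> t; rewrite e -e1 -e2 -big_split /=; apply: eq_bigr => k _; rewrite mulrDl.
Qed.

Lemma dilate_scale a c y (x : qvec n) : 0 <= a -> in_dilate V c y ->
  (forall t, x t = a * y t) -> in_dilate V (a * c) x.
Proof.
move=> a0 [l [p [s e]]] ex.
exists (fun k => a * l k); split; first by move=> k; rewrite mulr_ge0.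
split; first by rewrite -mulr_sumr s.
by move=> t; rewrite ex -e mulr_sumr; apply: eq_bigr => k _; rewrite mulrA.
Qed.

Lemma dilate_vertex v : v \in V -> in_dilate V 1 v.
Proof.
move=> vV; have iv : (index v V < size V)%N by rewrite index_mem.
pose e (k : 'I_(size V)) : rat := (k == Ordinal iv)%:R.
have sum_e (F : 'I_(size V) -> rat) : \sum_k e k * F k = F (Ordinal iv).
  rewrite (bigD1 (Ordinal iv)) //= /e eqxx mul1r big1 ?addr0 // => k /negbTE ->.
  by rewrite mul0r.
exists e; split; first by move=> k; rewrite ler0n.
split; first by rewrite -[RHS](sum_e (fun=> 1)); apply: eq_bigr => k _; rewrite mulr1.
by move=> t; rewrite sum_e /= nth_index.
Qed.

Lemma dilate_sum (I : eqType) (s : seq I) (c : I -> rat) (y : I -> qvec n) (x : qvec n) :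
  (forall i, i \in s -> in_dilate V (c i) (y i)) ->
  (forall t, x t = \sum_(i <- s) y i t) -> in_dilate V (\sum_(i <- s) c i) x.
Proof.
elim: s x => [|a s IH] x h e.
  exists (fun _ => 0); split=> //; split; first by rewrite big_nil big1.
  by move=> t; rewrite e big_nil big1 // => k _; rewrite mul0r.
rewrite big_cons; apply: (dilate_add (x1 := y a) (x2 := [ffun t => \sum_(i <- s) y i t])).
- by apply: h; rewrite mem_head.
- apply: IH => [i hi|t]; last by rewrite ffunE.
  by apply: h; rewrite in_cons hi orbT.
- by move=> t; rewrite e big_cons ffunE.
Qed.

End Dilates.

Definition gauge n (m : 'I_n -> nat) (x : qvec n) : rat := \sum_i `|x i| / (m i)%:R.

Definition admissible n (m : 'I_n -> nat) (j : nat) (x : qvec n) : bool :=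
  [forall i, ((x i != 0) ==> (0 < m i)%N) && ((x i < 0) ==> (val i < j)%N)].

Lemma gauge_ge0 n (m : 'I_n -> nat) x : 0 <= gauge m x.
Proof. by apply: sumr_ge0 => i _; rewrite mulr_ge0 ?invr_ge0 ?ler0n. Qed.

Definition axis n (i : 'I_n) (a : rat) : qvec n := [ffun t => if t == i then a else 0].

Lemma gauge_axis n (m : 'I_n -> nat) i a : gauge m (axis i a) = `|a| / (m i)%:R.
Proof.
rewrite /gauge (bigD1 i) //= ffunE eqxx big1 ?addr0 // => t /negbTE nti.
by rewrite ffunE nti normr0 mul0r.
Qed.

Lemma Gvert_props n (m : 'I_n -> nat) j v : v \in Gverts m j ->
  [/\ forall t, m t = 0%N -> v t = 0, forall t, (j <= val t)%N -> 0 <= v t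
    & gauge m v <= 1].
Proof.
have unit_gauge i a : `|a| = (m i)%:R -> gauge m (axis i a) <= 1.
  rewrite gauge_axis => ->; case: (m i) => [|k]; first by rewrite mul0r.
  by rewrite divff // pnatr_eq0.
rewrite /Gverts in_cons mem_cat => /orP [/eqP ->|/orP [/mapP [i _ ->]|/mapP [i]]].
- split=> [t _|t _|]; rewrite ?ffunE //.
  by rewrite /gauge big1 // => t _; rewrite ffunE normr0 mul0r.
- split=> [t|t _|]; rewrite ?ffunE; first by case: eqP => // -> ->.
    by case: eqP.
  by apply: (unit_gauge i); rewrite normr_nat.
- rewrite mem_filter => /andP [hij _] ->.
  split=> [t|t ht|]; rewrite ?ffunE; first by case: eqP => // -> ->; rewrite oppr0.
    by case: eqP => // eti; move: ht; rewrite eti leqNgt hij.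
  by apply: (unit_gauge i); rewrite normrN normr_nat.
Qed.

(* Necessity: a point of c * Delta is admissible with gauge at most c, since the
   admissibility conditions and the convex gauge bound hold for all vertices. *)
Lemma dilate_Gverts_bound n (m : 'I_n -> nat) j c x :
  in_dilate (Gverts m j) c x -> [/\ 0 <= c, admissible m j x & gauge m x <= c].
Proof.
move=> [l [lp [ls lx]]]; pose v (k : 'I_(size (Gverts m j))) := nth [ffun=> 0] (Gverts m j) k.
have vP k : [/\ forall t, m t = 0%N -> v k t = 0, forall t, (j <= val t)%N -> 0 <= v k t
              & gauge m (v k) <= 1] by exact: Gvert_props (mem_nth _ (ltn_ord k)).
rewrite -/v in lx.
split; first by rewrite -ls; apply: sumr_ge0.
- apply/forallP => i; apply/andP; split; apply/implyP.
  + apply: contraR; rewrite -leqNgt leqn0 => /eqP mi0.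
    by rewrite -lx big1 // => k _; case: (vP k) => h _ _; rewrite h // mulr0.
  + move=> xi; rewrite ltnNge; apply/negP => hji.
    move: xi; rewrite -lx ltNge sumr_ge0 // => k _.
    by case: (vP k) => _ h _; rewrite mulr_ge0 // h.
- apply: (@le_trans _ _ (\sum_k l k * gauge m (v k))); last first.
    by rewrite -ls; apply: ler_sum => k _; rewrite ler_piMr //; case: (vP k).
  rewrite /gauge (eq_bigr (fun k => \sum_t l k * (`|v k t| / (m t)%:R))); last first.
    by move=> k _; rewrite mulr_sumr.
  rewrite exchange_big /=; apply: ler_sum => t _.
  rewrite -lx [leRHS](eq_bigr (fun k => l k * `|v k t| / (m t)%:R)) => [|k _]; last by rewrite mulrA.
  rewrite -mulr_suml ler_wpM2r ?invr_ge0 ?ler0n //.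
  apply: le_trans (ler_norm_sum _ _ _) _.
  by apply: ler_sum => k _; rewrite normrM ger0_norm.
Qed.

(* An admissible coordinate x_i e_i is |x_i|/m_i times the vertex +-m_i e_i. *)
Lemma dilate_axis n (m : 'I_n -> nat) j (x : qvec n) i :
  admissible m j x -> in_dilate (Gverts m j) (`|x i| / (m i)%:R) (axis i (x i)).
Proof.
move=> /forallP /(_ i) /andP [/implyP hm /implyP hj].
have [xi0|/hm mp] := eqVneq (x i) 0.
  rewrite xi0 normr0 mul0r -(mul0r 1).
  apply: (dilate_scale (y := [ffun _ => 0])) => //; first exact/dilate_vertex/mem_head.
  by move=> t; rewrite !ffunE mul0r; case: eqP.
have mn0 : ((m i)%:R : rat) != 0 by rewrite pnatr_eq0 -lt0n.
rewrite -[_ / _]mulr1.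
have [xn|xp] := ltP (x i) 0.
  apply: (dilate_scale (y := axis i (- (m i)%:R))).
  - by rewrite mulr_ge0 ?invr_ge0 ?ler0n.
  - apply: dilate_vertex; rewrite /Gverts in_cons mem_cat; apply/orP; right.
    by apply/orP; right; apply: map_f; rewrite mem_filter hj // mem_enum.
  move=> t; rewrite !ffunE; case: eqP => _; last by rewrite mulr0.
  by rewrite ltr0_norm // mulrN divfK // opprK.
apply: (dilate_scale (y := axis i (m i)%:R)).
- by rewrite mulr_ge0 ?invr_ge0 ?ler0n.
- apply: dilate_vertex; rewrite /Gverts in_cons mem_cat; apply/orP; right.
  by apply/orP; left; apply: map_f; rewrite mem_enum.
move=> t; rewrite !ffunE; case: eqP => _; last by rewrite mulr0.
by rewrite ger0_norm // divfK.
Qed.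

Lemma dilate_Gverts n (m : 'I_n -> nat) j c x :
  in_dilate (Gverts m j) c x <-> [/\ 0 <= c, admissible m j x & gauge m x <= c].
Proof.
split; first exact: dilate_Gverts_bound.
move=> [c0 ok gc].
have split_x : in_dilate (Gverts m j) (gauge m x) x.
  apply: (dilate_sum (y := fun i => axis i (x i))) => [i _|t]; first exact: dilate_axis.
  rewrite (bigD1 t) //= ffunE eqxx big1 ?addr0 // => i /negbTE nit.
  by rewrite ffunE eq_sym nit.
have zero : in_dilate (Gverts m j) ((c - gauge m x) * 1) [ffun _ => 0].
  apply: (dilate_scale (y := [ffun _ => 0])); first by rewrite subr_ge0.
    exact/dilate_vertex/mem_head.
  by move=> t; rewrite !ffunE mulr0.
have := dilate_add split_x zero; rewrite mulr1 addrC subrK; apply.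
by move=> t; rewrite ffunE addr0.
Qed.

Lemma weight_Gverts n (m : 'I_n -> nat) j x w :
  is_weight (Gverts m j) x w <-> admissible m j x && (gauge m x == w).
Proof.
split.
  move=> [w0 [/dilate_Gverts [_ ok le] mn]].
  rewrite ok /= eq_le le /=; apply: mn; first exact: gauge_ge0.
  by apply/dilate_Gverts; split=> //; exact: gauge_ge0.
move=> /andP [ok /eqP <-]; split; first exact: gauge_ge0.
split; first by apply/dilate_Gverts; split=> //; exact: gauge_ge0.
by move=> c' _ /dilate_Gverts [].
Qed.

Definition has_weight n (m : 'I_n -> nat) (j : nat) (w : rat) (u : zvec n) : bool :=
  admissible m j (zvec_to_q u) && (gauge m (zvec_to_q u) == w).

Lemma enum_box n (P : pred (zvec n)) (K : nat) :
  (forall u, P u -> forall i, `|u i| <= K%:Z) ->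
  exists s : seq (zvec n), uniq s /\ forall u, (u \in s) = P u.
Proof.
move=> hb.
pose toZ (f : {ffun 'I_n -> 'I_(K.*2.+1)}) : zvec n := [ffun i => (f i : nat)%:Z - K%:Z].
exists [seq toZ f | f <- enum {ffun 'I_n -> 'I_(K.*2.+1)} & P (toZ f)]; split.
  rewrite map_inj_uniq; first by rewrite filter_uniq // enum_uniq.
  move=> f g e.
  apply/ffunP => i; apply: val_inj => /=.
  by have := congr1 (fun h : zvec n => h i) e; rewrite /toZ !ffunE => /addIr [].
move=> u; apply/idP/idP; first by move=> /mapP [f]; rewrite mem_filter => /andP [Pf _] ->.
move=> Pu.
have eu : toZ [ffun i => inord (absz (u i + K%:Z))] = u.
  apply/ffunP => i; rewrite /toZ !ffunE.
  have := hb u Pu i; rewrite ler_norml => /andP [h1 h2].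
  rewrite inordK; last by rewrite -addnn; move: (u i) h1 h2 => z h1 h2; lia.
  by rewrite gez0_abs ?addrK //; move: (u i) h1 h2 => z h1 h2; lia.
by rewrite -eu; apply: map_f; rewrite mem_filter mem_enum andbT eu.
Qed.

Lemma coord_bound n (m : 'I_n -> nat) j x i :
  admissible m j x -> `|x i| <= gauge m x * (m i)%:R.
Proof.
move=> /forallP /(_ i) /andP [/implyP hm _].
have [->|/hm mp] := eqVneq (x i) 0; first by rewrite normr0 mulr_ge0 ?gauge_ge0 ?ler0n.
rewrite -ler_pdivrMr ?ltr0n // /gauge (bigD1 i) //= lerDl.
by apply: sumr_ge0 => k _; rewrite mulr_ge0 ?invr_ge0 ?ler0n.
Qed.

Lemma has_weight_enum n (m : 'I_n -> nat) j w : 0 <= w ->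
  exists s : seq (zvec n), uniq s /\ forall u, (u \in s) = has_weight m j w u.
Proof.
move=> w0; apply: (@enum_box _ _ (Num.Def.archi_bound w * \sum_i m i)%N).
move=> u /andP [ok /eqP ew] i.
rewrite -(ler_int rat) intr_norm.
have := coord_bound i ok; rewrite ew /zvec_to_q ffunE => /le_trans; apply.
rewrite -[X in _ <= X]/(_%:R) natrM; apply: (@le_trans _ _ (w * (\sum_i m i)%:R)).
  by rewrite ler_wpM2l // ler_nat (bigD1 i) //= leq_addr.
by rewrite ler_wpM2r ?ler0n // ltW // archi_boundP.
Qed.

Lemma Ncard_of n V w (s : seq (zvec n)) (P : pred (zvec n)) :
  uniq s -> (forall u, (u \in s) = P u) ->
  (forall u, is_weight V (zvec_to_q u) w <-> P u) -> Ncard V w (size s).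
Proof. by move=> us ms pw; exists s; do 2!split=> //; move=> u; rewrite ms; split=> /pw. Qed.

(* The passage from G^{j-1} to G^j (0-based: from j to j.+1 negative vertices)
   and to the face polytope on the coordinates other than j. *)
Section Recursion.
Variables (n' : nat) (m : 'I_n'.+1 -> nat) (j : 'I_n'.+1) (w : rat).
Let m' := fun i : 'I_n' => m (lift j i).

Definition qflip (x : qvec n'.+1) : qvec n'.+1 := [ffun k => if k == j then - x k else x k].
Definition zflip (u : zvec n'.+1) : zvec n'.+1 := [ffun k => if k == j then - u k else u k].
Definition qres (x : qvec n'.+1) : qvec n' := [ffun i => x (lift j i)].
Definition zres (u : zvec n'.+1) : zvec n' := [ffun i => u (lift j i)].
Definition zext (v : zvec n') : zvec n'.+1 :=
  [ffun k => if unlift j k is Some i then v i else 0].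

Lemma zflipK : involutive zflip.
Proof. by move=> u; apply/ffunP => k; rewrite !ffunE; case: eqP; rewrite ?opprK. Qed.

Lemma zflip_j u : zflip u j = - u j.
Proof. by rewrite ffunE eqxx. Qed.

Lemma zresK (u : zvec n'.+1) : u j = 0 -> zext (zres u) = u.
Proof. by move=> uj; apply/ffunP => k; rewrite !ffunE; case: unliftP => [i ->|->]; rewrite ?ffunE. Qed.

Lemma zextK : cancel zext zres.
Proof. by move=> v; apply/ffunP => i; rewrite !ffunE liftK. Qed.

Lemma zext_j v : zext v j = 0.
Proof. by rewrite ffunE unlift_none. Qed.

Lemma ne_val (i : 'I_n'.+1) : i != j -> (val i == val j) = false.
Proof. by move=> /negbTE <-. Qed.

Lemma admissible_pos (x : qvec n'.+1) :
  0 <= x j -> admissible m (val j).+1 x = admissible m (val j) x.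
Proof.
move=> xj; apply: eq_forallb => i; congr (_ && _).
have [->|/ne_val nij] := eqVneq i j; first by rewrite ltnSn ltnn ltNge xj.
by rewrite ltnS leq_eqVlt nij.
Qed.

Lemma admissible_neg (x : qvec n'.+1) :
  x j < 0 -> admissible m (val j).+1 x = admissible m (val j) (qflip x).
Proof.
move=> xj; apply: eq_forallb => i; rewrite ffunE.
have [->|/ne_val nij] := eqVneq i j.
  by rewrite oppr_eq0 ltnSn oppr_lt0 (lt_gtF xj) !implybT.
by rewrite [(_ < (val j).+1)%N]ltnS [(_ <= val j)%N]leq_eqVlt nij.
Qed.

Lemma lift_lt (i : 'I_n') : (val (lift j i) < val j)%N = (val i < val j)%N.
Proof. by rewrite /= /bump; case: leqP => h; lia. Qed.

Lemma admissible_res (x : qvec n'.+1) :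
  x j = 0 -> admissible m (val j) x = admissible m' (val j) (qres x).
Proof.
move=> xj; apply/forallP/forallP => h i; first by rewrite ffunE /m' -lift_lt; apply: h.
case: (unliftP j i) => [i' ->|->]; last by rewrite xj eqxx ltxx.
by have := h i'; rewrite ffunE /m' lift_lt.
Qed.

Lemma gauge_res (x : qvec n'.+1) : x j = 0 -> gauge m x = gauge m' (qres x).
Proof.
move=> xj; rewrite /gauge (bigD1_ord j) //= xj normr0 mul0r add0r.
by apply: eq_bigr => i _; rewrite ffunE.
Qed.

Lemma has_weight_nonneg u : has_weight m (val j) w u -> 0 <= u j.
Proof.
move=> /andP [/forallP /(_ j) /andP [_ /implyP h] _].
rewrite leNgt; apply/negP => hn.
by have := h; rewrite /zvec_to_q ffunE ltrz0 ltnn => /(_ hn).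
Qed.

Lemma has_weight_step u : has_weight m (val j).+1 w u =
  if 0 <= u j then has_weight m (val j) w u else has_weight m (val j) w (zflip u).
Proof.
rewrite /has_weight.
have -> : zvec_to_q (zflip u) = qflip (zvec_to_q u).
  by apply/ffunP => k; rewrite !ffunE; case: eqP; rewrite ?intrN.
have -> : gauge m (qflip (zvec_to_q u)) = gauge m (zvec_to_q u).
  by apply: eq_bigr => k _; rewrite ffunE; case: eqP; rewrite ?normrN.
case: ifP => h.
  by rewrite admissible_pos // /zvec_to_q ffunE ler0z.
by rewrite admissible_neg // /zvec_to_q ffunE ltrz0 ltNge h.
Qed.

Lemma has_weight_res (u : zvec n'.+1) :
  u j = 0 -> has_weight m (val j) w u = has_weight m' (val j) w (zres u).
Proof.
move=> uj; have xj : zvec_to_q u j = 0 by rewrite ffunE uj.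
rewrite /has_weight admissible_res // gauge_res //.
have -> // : zvec_to_q (zres u) = qres (zvec_to_q u) by apply/ffunP => k; rewrite !ffunE.
Qed.

Variables (S : seq (zvec n'.+1)).
Hypotheses (uniqS : uniq S) (memS : forall u, (u \in S) = has_weight m (val j) w u).

Definition listG : seq (zvec n'.+1) := S ++ map zflip [seq u : zvec n'.+1 <- S | 0 < u j].
Definition listF : seq (zvec n') := map zres [seq u : zvec n'.+1 <- S | u j == 0].

Lemma listG_uniq : uniq listG.
Proof.
rewrite cat_uniq uniqS map_inj_uniq ?filter_uniq ?andbT //; last exact: can_inj zflipK.
apply/hasPn => u /mapP [v]; rewrite mem_filter => /andP [vp _] ->.
by rewrite memS; apply/negP => /has_weight_nonneg; rewrite zflip_j oppr_ge0 leNgt vp.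
Qed.

Lemma mem_listG u : (u \in listG) = has_weight m (val j).+1 w u.
Proof.
rewrite mem_cat.
have -> : (u \in map zflip [seq u : zvec n'.+1 <- S | 0 < u j]) =
          (zflip u \in [seq u : zvec n'.+1 <- S | 0 < u j]).
  by rewrite -{1}(zflipK u) (mem_map (can_inj zflipK)).
rewrite has_weight_step memS mem_filter memS zflip_j oppr_gt0; case: ifP => h.
  by rewrite ltNge h /= orbF.
have -> // : has_weight m (val j) w u = false by apply/negP => /has_weight_nonneg; rewrite h.
by rewrite ltNge h.
Qed.

Lemma listF_uniq : uniq listF.
Proof.
rewrite map_inj_in_uniq ?filter_uniq // => u1 u2.
rewrite !mem_filter => /andP [/eqP h1 _] /andP [/eqP h2 _] e.
by rewrite -(zresK h1) -(zresK h2) e.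
Qed.

Lemma mem_listF v : (v \in listF) = has_weight m' (val j) w v.
Proof.
apply/idP/idP.
  by move=> /mapP [u]; rewrite mem_filter memS => /andP [/eqP uj Pu] ->; rewrite -has_weight_res.
move=> Pv; rewrite -(zextK v); apply: map_f.
by rewrite mem_filter zext_j eqxx memS has_weight_res ?zext_j ?zextK.
Qed.

(* Every point of S has x_j > 0 or x_j = 0, so |listG| + |listF| = 2 |S|. *)
Lemma size_lists : (size listG + size listF = 2 * size S)%N.
Proof.
have allS : all (fun u : zvec n'.+1 => 0 <= u j) S.
  by apply/allP => u; rewrite memS; apply: has_weight_nonneg.
rewrite size_cat !size_map !size_filter -addnA mul2n -addnn; congr (_ + _)%N.
elim: S allS => [|u s IH] //= /andP [h hs].
by rewrite -IH // lt0r h andbT; case: eqP => _ /=; lia.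
Qed.

End Recursion.

Theorem mainTheorem4 (n' : nat) (m : 'I_n'.+1 -> nat) (j : 'I_n'.+1) (w : rat) :
  0 <= w ->
  exists a b c : nat,
    Ncard (Gverts m (val j).+1) w a /\
    Ncard (Gverts m (val j)) w b /\
    Ncard (Gverts (fun i : 'I_n' => m (lift j i)) (val j)) w c /\
    (a + c = 2 * b)%N.
Proof.
move=> w0; have [S [uS mS]] := has_weight_enum m (val j) w0.
exists (size (listG j S)), (size S), (size (listF j S)); split; last split; last split.
- apply: (Ncard_of (P := has_weight m (val j).+1 w) (listG_uniq uS mS) (mem_listG mS)).
  by move=> u; exact: weight_Gverts.
- apply: (Ncard_of (P := has_weight m (val j) w) uS mS).
  by move=> u; exact: weight_Gverts.
- apply: (Ncard_of (P := has_weight (fun i => m (lift j i)) (val j) w) (listF_uniq j uS)).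
  + exact: mem_listF.
  + by move=> u; exact: weight_Gverts.
- exact: size_lists.
Qed.
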